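(* Let $X$ be a finite $T_0$-space. If $x_i\in X$ is a weak beat point, then $\det(X_M)=-\det\big((X\setminus\{x_i\})_M\big)$.
   Context: A finite $T_0$-space is identified with a finite poset via $x\le y$ iff $U_x\subseteq U_y$, where $U_x$ is the minimal open set containing $x$; subsets carry the induced order/subspace topology. For a labelling $X=\{x_1,\dots,x_n\}$, $X_M=(x_{i,j})$ is the $n\times n$ matrix with $x_{i,j}=0$ if $x_i\le x_j$ and $x_{i,j}=1$ otherwise; its determinant does not depend on the labelling. Let $\hat U_x=\{y: y<x\}$ and $\hat F_x=\{y:y>x\}$. A point $x$ is a down weak beat point if $\hat U_x$ is contractible, an up weak beat point if $\hat F_x$ is contractible, and a weak beat point if it is either. *)

From mathcomp Require Import all_boot all_order all_algebra.
From Stdlib Require Import Reals.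
Set Implicit Arguments.
Unset Strict Implicit.
Unset Printing Implicit Defensive.
Import Order.Theory GRing.Theory.

(* A finite T0-space is a finite poset (T : finPOrderType d); x <= y iff U_x ⊆ U_y.
   Open sets of the subspace S ⊆ T are exactly the down-closed subsets of S
   (the topology induced from the Alexandrov/down-set topology).  *)
Section FiniteSpaces.
Context {d : Order.disp_t} {T : finPOrderType d}.
Local Open Scope order_scope.

Definition openIn (S V : {set T}) : Prop :=
  V \subset S /\ forall x y, y \in S -> x \in V -> y <= x -> y \in V.

(* H : [0,1] × S -> S is continuous, where [0,1] ⊆ R carries the Euclidean
   topology and [0,1] × S the product topology: the preimage of every open V
   of S is open, i.e. each of its points (t,s) has a basic neighbourhood
   ((t-e,t+e) ∩ [0,1]) × U_s (U_s = minimal open set of s in S) inside it. *)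
Definition homotopy_continuous (S : {set T}) (H : R -> T -> T) : Prop :=
  forall V, openIn S V ->
  forall t s, (Rle 0 t /\ Rle t 1) -> s \in S -> H t s \in V ->
  exists e : R, Rlt 0 e /\
    forall t' s', (Rle 0 t' /\ Rle t' 1) -> Rlt (Rabs (Rminus t' t)) e -> s' \in S -> s' <= s ->
      H t' s' \in V.

Definition contractible (S : {set T}) : Prop :=
  exists (y0 : T) (H : R -> T -> T),
    y0 \in S /\
    (forall t s, (Rle 0 t /\ Rle t 1) -> s \in S -> H t s \in S) /\
    homotopy_continuous S H /\
    (forall s, s \in S -> H R0 s = s) /\
    (forall s, s \in S -> H R1 s = y0).

Definition hatU (x : T) : {set T} := [set y | y < x].
Definition hatF (x : T) : {set T} := [set y | x < y].

Definition down_weak_beat_point (x : T) : Prop := contractible (hatU x).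
Definition up_weak_beat_point (x : T) : Prop := contractible (hatF x).
Definition weak_beat_point (x : T) : Prop :=
  down_weak_beat_point x \/ up_weak_beat_point x.

Definition space_matrix (A : {set T}) : 'M[int]_#|A| :=
  \matrix_(i, j) (if (enum_val i <= enum_val j) then (0 : int) else (1 : int)).

Definition space_det (A : {set T}) : int := \det (space_matrix A).

End FiniteSpaces.

(* For B a subset of X let c(B) be the sum of (-1)^|s| over the chains s of B,
   the empty chain included (minus the reduced Euler characteristic of the
   order complex of B).  X_M = J - Z, where Z is the zeta matrix (triangular for
   a linear extension, so det Z = 1) and J = Z w u with w_a = c({y in X | a < y})
   and u the all-ones row; the matrix determinant lemma and c(X) = 1 - sum_a w_a
   then give det X_M = (-1)^|X| c(X).  Sorting chains by whether they contain x
   gives c(X) = c(X \ x) - c(hatU x) c(hatF x), so it suffices that c(S) = 0 for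
   a contractible S.  The stages H_t of a contraction are order-preserving
   self-maps of S with H_t' <= H_t for t' near t.  For order-preserving f <= g,
   c(Fix f) = c(Fix g): change f into g one point p at a time; each change adds
   or removes p as a fixed point, and the fixed points on the other side of p
   have a least (resp. greatest) element, so the correction term vanishes.
   Hence c(Fix H_t) is locally constant on [0,1] and
   c(S) = c(Fix H_0) = c(Fix H_1) = c({y0}) = 0. *)

From Stdlib Require Import Reals Lra Classical.
From mathcomp Require Import all_boot all_order all_algebra all_fingroup.
Set Implicit Arguments.
Unset Strict Implicit.
Unset Printing Implicit Defensive.
Import Order.Theory GRing.Theory.
Local Open Scope ring_scope.

Lemma det_1_sub_mulmx (R : comNzRingType) n (w : 'cV[R]_n) (v : 'rV[R]_n) :
  \det (1%:M - w *m v) = 1 - (v *m w) 0 0.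
Proof.
pose P := block_mx (1%:M : 'M[R]_1) v w 1%:M.
have P_lower : P = block_mx 1%:M 0 w 1%:M *m block_mx 1%:M v 0 (1%:M - w *m v).
  by rewrite mulmx_block !mul0mx !mulmx0 !mul1mx mulmx1 !addr0 addrC subrK.
have P_upper : P = block_mx (1%:M - v *m w) v 0 1%:M *m block_mx 1%:M 0 w 1%:M.
  by rewrite mulmx_block !mulmx1 !mul0mx !mulmx0 !mul1mx ?add0r ?addr0 subrK.
have := congr1 determinant P_upper; rewrite P_lower !det_mulmx.
rewrite !det_lblock !det_ublock !det1 !mul1r !mulr1 => ->.
by rewrite det_mx11 !mxE eqxx.
Qed.

Lemma exists_maximal {d : Order.disp_t} {T : finPOrderType d} (B : {set T}) x :
  x \in B -> exists2 z, z \in B & {in B, forall y, ~~ (z < y)%O}.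
Proof.
move=> xB; have [z zB zmin] := arg_minnP (fun z => #|[set y in B | (z < y)%O]|) xB.
exists z => // y yB; apply/negP => zy; have := zmin y yB; apply/negP; rewrite -ltnNge.
apply: proper_card; apply/properP; split; last by exists y; rewrite !inE ?yB ?zy ?ltxx.
by apply/subsetP => w; rewrite !inE => /andP[-> /(lt_trans zy)->].
Qed.

Lemma exists_minimal {d : Order.disp_t} {T : finPOrderType d} (B : {set T}) x :
  x \in B -> exists2 z, z \in B & {in B, forall y, ~~ (y < z)%O}.
Proof. exact: (@exists_maximal _ T^d). Qed.

Section ChainSum.
Context {d : Order.disp_t} {T : finPOrderType d}.
Implicit Types (A B a b c : {set T}) (p r x y : T).
Local Open Scope order_scope.

Definition chain c : bool := [forall x in c, forall y in c, x >=< y].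

Definition chain_weight c : int := if chain c then ((-1) ^+ #|c|)%R else 0%R.

Definition chain_sum B : int := (\sum_(c : {set T} | c \subset B) chain_weight c)%R.

Definition below A p : {set T} := [set y in A | y < p].
Definition above A p : {set T} := [set y in A | p < y].

Lemma chainP c : reflect {in c &, forall x y, x >=< y} (chain c).
Proof.
apply: (iffP forall_inP) => [H x y xc yc | H x xc].
  by move/forall_inP: (H x xc); apply.
by apply/forall_inP => y yc; apply: H.
Qed.

Lemma chainU1 c r : chain (r |: c) = chain c && [forall y in c, r >=< y].
Proof.
apply/chainP/andP => [H | [/chainP H /forall_inP Hr] x y].
  split; first by apply/chainP => x y xc yc; apply: H; rewrite !in_setU1 ?xc ?yc orbT.
  by apply/forall_inP => y yc; apply: H; rewrite !in_setU1 ?yc ?eqxx ?orbT.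
rewrite !in_setU1 => /orP[/eqP-> | xc] /orP[/eqP-> | yc]; rewrite ?comparablexx //.
- exact: Hr.
- by rewrite comparable_sym; apply: Hr.
- exact: H.
Qed.

Lemma chain_weightU1 c r : r \notin c ->
  chain_weight (r |: c) = if [forall y in c, r >=< y] then (- chain_weight c)%R else 0%R.
Proof.
rewrite /chain_weight chainU1 cardsU1 => /negPf->.
by case: (chain c); case: [forall y in c, _]; rewrite //= exprS mulN1r.
Qed.

Lemma chain_weightU_lt a b : {in a & b, forall x y, x < y} ->
  chain_weight (a :|: b) = (chain_weight a * chain_weight b)%R.
Proof.
move=> ab; have ab_le x y : x \in a -> y \in b -> x <= y by move=> *; apply/ltW/ab.
have chainU : chain (a :|: b) = chain a && chain b.
  apply/chainP/andP => [H | [/chainP Ha /chainP Hb] x y].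
    by split; apply/chainP => x y xc yc; apply: H; rewrite in_setU ?xc ?yc ?orbT.
  rewrite !in_setU => /orP[xa | xb] /orP[ya | yb].
  - exact: Ha.
  - by rewrite le_comparable ?ab_le.
  - by rewrite comparable_sym le_comparable ?ab_le.
  - exact: Hb.
have cardU : #|a :|: b| = (#|a| + #|b|)%N.
  rewrite -cardsUI (_ : a :&: b = set0) ?cards0 ?addn0 //.
  by apply/setP => x; rewrite !inE; apply/negbTE/andP => -[xa /(ab x x xa)]; rewrite ltxx.
rewrite /chain_weight chainU cardU.
by case: (chain a); case: (chain b); rewrite ?mulr0 ?mul0r // exprD.
Qed.

Lemma sum_subsets_D1 B r (F : {set T} -> int) : r \in B ->
  (\sum_(c : {set T} | c \subset B) F c =
   \sum_(c : {set T} | c \subset B :\ r) (F c + F (r |: c)))%R.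
Proof.
move=> rB; rewrite big_split /= [LHS](bigID (fun c : {set T} => r \in c)) /= addrC.
congr (_ + _)%R.
  by apply: eq_bigl => c; rewrite subsetD1; case: (r \in c); rewrite ?andbF ?andbT.
rewrite (reindex_onto (fun c => r |: c) (fun c => c :\ r)) /=; last first.
  by move=> c /andP[_ rc]; rewrite setD1K.
apply: eq_bigl => c; rewrite setU11 andbT subUset sub1set rB /= subsetD1.
case rc: (r \in c); last by rewrite setU1K ?rc // eqxx.
rewrite andbF; apply/negbTE/negP => /andP[_ /eqP E].
by move: rc; rewrite -E setD11.
Qed.

Lemma sum_subsets_disjointU a b (F : {set T} -> int) : [disjoint a & b] ->
  (\sum_(c : {set T} | c \subset a :|: b) F c =
   \sum_(a' : {set T} | a' \subset a) \sum_(b' : {set T} | b' \subset b) F (a' :|: b'))%R.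
Proof.
move=> dab; rewrite pair_big_dep /=.
rewrite (reindex_onto (fun c : {set T} * {set T} => c.1 :|: c.2)
                      (fun c => (c :&: a, c :&: b))) /=; last first.
  by move=> c cab; rewrite -setIUr; apply/setIidPl.
apply: eq_bigl => -[a' b'] /=; apply/andP/andP => [[_ /eqP[<- <-]] | [a'a b'b]].
  by rewrite !subsetIr.
split; first by rewrite setUSS.
have [Ia Ib] : a' :&: b = set0 /\ b' :&: a = set0.
  split; apply/disjoint_setI0; first exact: disjointWl a'a dab.
  by rewrite disjoint_sym in dab; exact: disjointWl b'b dab.
by rewrite !setIUl (setIidPl a'a) (setIidPl b'b) Ia Ib setU0 set0U.
Qed.

Lemma chain_sum0 : chain_sum set0 = 1%R.
Proof.
rewrite /chain_sum (big_pred1 set0) => [|c]; last by rewrite subset0.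
by rewrite /chain_weight cards0; case: chainP => // -[x y]; rewrite inE.
Qed.

Lemma chain_sum_cone B r : r \in B -> {in B, forall y, r >=< y} -> chain_sum B = 0%R.
Proof.
move=> rB Hr; rewrite /chain_sum (sum_subsets_D1 _ rB); apply: big1 => c.
rewrite subsetD1 => /andP[cB rc]; rewrite chain_weightU1 //.
suff -> : [forall y in c, r >=< y] by rewrite addrN.
by apply/forall_inP => y /(subsetP cB); apply: Hr.
Qed.

Lemma chain_sum_min B r : r \in B -> {in B, forall y, r <= y} -> chain_sum B = 0%R.
Proof. by move=> rB Hr; apply: (chain_sum_cone rB) => y /Hr /le_comparable. Qed.

Lemma chain_sum_D1 A p : p \in A ->
  chain_sum A = (chain_sum (A :\ p) - chain_sum (below A p) * chain_sum (above A p))%R.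
Proof.
move=> pA; rewrite {1}/chain_sum (sum_subsets_D1 _ pA) big_split /=; congr (_ + _)%R.
set L := below A p; set U := above A p.
have LU_lt : {in L & U, forall x y, x < y}.
  by move=> x y; rewrite !inE => /andP[_ xp] /andP[_ py]; apply: lt_trans py.
have dLU : [disjoint L & U].
  by rewrite -setI_eq0; apply/set0Pn => -[x]; rewrite inE => /andP[/LU_lt/[apply]]; rewrite ltxx.
have comparable_p c : c \subset A :\ p -> [forall y in c, p >=< y] = (c \subset L :|: U).
  move=> cA; apply/forall_inP/subsetP => H y yc; have := subsetP cA y yc; rewrite !inE.
    case/andP=> ynp ->; rewrite /= !lt_neqAle ynp eq_sym ynp /= orbC.
    exact: H.
  move=> _; move: (H y yc); rewrite !inE => /orP[] /andP[_ /ltW].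
    by rewrite comparable_sym; apply: le_comparable.
  exact: le_comparable.
have LU_A : L :|: U \subset A :\ p.
  apply/subsetP => y; rewrite !inE => /orP[] /andP[-> yp]; rewrite andbT.
    by rewrite (lt_eqF yp).
  by rewrite (gt_eqF yp).
transitivity (\sum_(c : {set T} | c \subset L :|: U) - chain_weight c)%R.
  rewrite [RHS](eq_bigl (fun c => (c \subset A :\ p) && (c \subset L :|: U))); last first.
    by move=> c; apply/idP/andP => [cLU | []//]; split=> //; apply: subset_trans LU_A.
  rewrite [RHS]big_mkcondr; apply: eq_bigr => c cA.
  have pc : p \notin c by move: cA; rewrite subsetD1 => /andP[].
  by rewrite chain_weightU1 // comparable_p.
rewrite sumrN sum_subsets_disjointU // /chain_sum big_distrlr /=; congr (- _)%R.
apply: eq_bigr => a aL; apply: eq_bigr => b bU; apply: chain_weightU_lt => x y xa yb.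
by apply: LU_lt; [apply: (subsetP aL) | apply: (subsetP bU)].
Qed.

Lemma chain_sum_rec B : chain_sum B = (1 - \sum_(p in B) chain_sum (above B p))%R.
Proof.
elim: {B}_.+1 {-2}B (ltnSn #|B|) => // n IH B.
have [-> _ | [x xB]] := set_0Vmem B; first by rewrite chain_sum0 big_set0 subr0.
rewrite ltnS => Bn; have [p pB pmin] := exists_minimal xB.
have -> : chain_sum B = (chain_sum (B :\ p) - chain_sum (above B p))%R.
  rewrite (chain_sum_D1 pB) (_ : below B p = set0) ?chain_sum0 ?mul1r //.
  by apply/setP => y; rewrite !inE; apply/negbTE/andP => -[/pmin/negP].
rewrite IH; last by rewrite (cardsD1 p B) pB in Bn.
rewrite [in RHS](bigD1 p) //= [(chain_sum _ + _)%R]addrC opprD addrA.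
congr (_ - _ - _)%R; apply: eq_big => [q | q]; first by rewrite !inE andbC.
rewrite !inE => /andP[qp qB]; congr chain_sum; apply/setP => y; rewrite !inE.
by case: (y =P p) => [-> | //]; rewrite pB (negbTE (pmin q qB)).
Qed.

Lemma sum_chain_sum_above A x : x \in A ->
  (\sum_(p in A | (x <= p)%O) chain_sum (above A p))%R = 1%R.
Proof.
move=> xA; set C := [set y in A | x <= y].
have : chain_sum C = 0%R.
  by apply: (@chain_sum_min _ x) => [|y]; rewrite inE ?xA ?lexx // => /andP[].
rewrite chain_sum_rec => /eqP; rewrite subr_eq0 => /eqP ->.
apply: eq_big => [p | p /andP[pA xp]]; first by rewrite inE.
congr chain_sum; apply/setP => y; rewrite !inE.
by case: (boolP (p < y)) => py; rewrite ?andbF // !andbT (le_trans xp (ltW py)) andbT.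
Qed.

End ChainSum.

Lemma chain_sum_dual {d : Order.disp_t} {T : finPOrderType d} (B : {set T}) :
  @chain_sum _ T^d B = chain_sum B.
Proof.
apply: eq_bigr => c _; rewrite /chain_weight; congr (if _ then _ else _).
by apply/chainP/chainP => H x y xc yc; rewrite comparable_sym; apply: H.
Qed.

Section SpaceDet.
Context {d : Order.disp_t} {T : finPOrderType d}.
Local Open Scope order_scope.

Lemma inflationary_perm_eq1 (I : finType) (h : I -> T) (s : {perm I}) :
  injective h -> (forall i, h i <= h (s i)) -> s = 1%g.
Proof.
move=> h_inj hs; apply/permP => i; rewrite perm1.
have hsk k j : h j <= h ((s ^+ k)%g j).
  by elim: k => [|k IH]; rewrite ?expg0 ?perm1 // expgSr permM (le_trans IH).
have := hsk #[s]%g.-1 (s i); rewrite -permM -expgS prednK ?order_gt0 // expg_order perm1.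
by move=> hsi; apply: h_inj; apply: le_anti; rewrite hsi hs.
Qed.

Definition zeta_mx (A : {set T}) : 'M[int]_#|A| :=
  \matrix_(i, j) (if enum_val i <= enum_val j then 1%R else 0%R).

Lemma det_zeta_mx (A : {set T}) : \det (zeta_mx A) = 1%R.
Proof.
rewrite /determinant (bigD1 1%g) //= odd_perm1 expr0 mul1r big1 => [|i _]; last first.
  by rewrite perm1 mxE lexx.
rewrite big1 ?addr0 // => s s1.
have [/forallP s_infl | ] := boolP [forall i, enum_val i <= enum_val (s i)].
  by rewrite (inflationary_perm_eq1 enum_val_inj s_infl) eqxx in s1.
rewrite negb_forall => /existsP[i si].
by rewrite (bigD1 i) //= mxE (negbTE si) mul0r mulr0.
Qed.

Lemma space_det_chain_sum (A : {set T}) : space_det A = ((-1) ^+ #|A| * chain_sum A)%R.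
Proof.
pose w : 'cV[int]_#|A| := \col_j chain_sum (above A (enum_val j)).
pose u : 'rV[int]_#|A| := const_mx 1%R.
have zeta_w : (zeta_mx A *m w)%R = const_mx 1%R.
  apply/matrixP => i k; rewrite !mxE -(sum_chain_sum_above (enum_valP i)).
  rewrite big_mkcondr [RHS]big_enum_val /=; apply: eq_bigr => j _.
  by rewrite !mxE; case: ifP; rewrite ?mul1r ?mul0r.
rewrite /space_det (_ : space_matrix A = - (zeta_mx A *m (1%:M - w *m u))%R); last first.
  rewrite mulmxBr mulmx1 mulmxA zeta_w; apply/matrixP => i j; rewrite !mxE.
  by rewrite big_ord1 !mxE mul1r; case: ifP.
rewrite -scaleN1r detZ det_mulmx det_zeta_mx det_1_sub_mulmx mul1r.
congr (_ * _)%R; rewrite chain_sum_rec mxE [in RHS]big_enum_val /=.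
by congr (_ - _)%R; apply: eq_bigr => j _; rewrite !mxE mul1r.
Qed.

End SpaceDet.

Section LeastFixedPoint.
Context {d : Order.disp_t} {T : finPOrderType d}.
Variable S : {set T}.
Implicit Types (f g : T -> T) (p x y z : T).
Local Open Scope order_scope.

Definition fixed_in f : {set T} := [set s in S | f s == s].

Definition monotone_endo f : Prop :=
  {in S, forall s, f s \in S} /\ {in S &, {homo f : x y / x <= y}}.

Lemma least_fixed_above g x : monotone_endo g -> x \in S -> x <= g x ->
  exists z, [/\ z \in fixed_in g, x <= z & {in fixed_in g, forall y, x <= y -> z <= y}].
Proof.
move=> [gS gmono] xS xgx.
pose Q := [set z in S |
  [&& x <= z, z <= g z & [forall y in fixed_in g, (x <= y) ==> (z <= y)]]].
have xQ : x \in Q.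
  by rewrite inE xS lexx xgx; apply/forall_inP => y _; apply/implyP.
have [z zQ zmax] := exists_maximal xQ.
move: zQ; rewrite inE => /and4P[zS xz zgz /forall_inP zleast].
have gzQ : g z \in Q.
  rewrite inE gS // (le_trans xz zgz) gmono ?gS //=.
  apply/forall_inP => y yfix; apply/implyP => xy; move: (yfix) (zleast y yfix).
  by rewrite inE => /andP[yS /eqP gy] /implyP/(_ xy) zy; rewrite -gy gmono.
have gzz : g z = z by apply/eqP; move: (zmax _ gzQ); rewrite lt_def zgz andbT negbK.
exists z; split=> // [|y yfix xy]; first by rewrite inE zS gzz eqxx.
exact: (implyP (zleast y yfix)).
Qed.

Lemma chain_sum_fixed_up f g p : monotone_endo g -> p \in fixed_in f -> p < g p ->
  {in S, forall s, s != p -> f s = g s} -> chain_sum (fixed_in f) = chain_sum (fixed_in g).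
Proof.
move=> [gS gmono] pfix pgp fg; move: (pfix); rewrite inE => /andP[pS /eqP fp].
have fixed_g : fixed_in g = fixed_in f :\ p.
  apply/setP => s; rewrite !inE; have [-> | sp] := eqVneq s p.
    by rewrite (gt_eqF pgp) andbF.
  by case sS: (s \in S); rewrite //= fg.
rewrite fixed_g (chain_sum_D1 pfix) [chain_sum (above _ _)](_ : _ = 0) ?mulr0 ?subr0 //.
have [|z [zfix gpz zleast]] := @least_fixed_above g (g p) (conj gS gmono) (gS p pS).
  by rewrite gmono ?gS // ltW.
have pz := lt_le_trans pgp gpz.
(* Above p, the fixed points of f are those of g above g p, and z is the least. *)
have above_g y : y \in above (fixed_in f) p -> y \in fixed_in g /\ g p <= y.
  rewrite !inE => /andP[/andP[yS /eqP fy] py].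
  have gy : g y = y by rewrite -fg ?fy ?gt_eqF.
  by rewrite yS gy eqxx -gy gmono // ltW.
apply: (@chain_sum_min _ _ _ z) => [|y /above_g[yfix gpy]]; last exact: zleast.
move: zfix; rewrite !inE pz andbT => /andP[zS /eqP gz].
by rewrite zS fg ?gz ?eqxx ?gt_eqF.
Qed.

End LeastFixedPoint.

Lemma chain_sum_fixed_down {d : Order.disp_t} {T : finPOrderType d} (S : {set T}) f g p :
  monotone_endo S f -> p \in fixed_in S g -> (f p < p)%O ->
  {in S, forall s, s != p -> f s = g s} -> chain_sum (fixed_in S f) = chain_sum (fixed_in S g).
Proof.
move=> [fS fmono] pfix fpp fg.
have := @chain_sum_fixed_up _ T^d S g f p; rewrite !chain_sum_dual => -> //.
  by split=> // a b aS bS; apply: fmono.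
by move=> s sS sp; rewrite fg.
Qed.

Section FixedChainSum.
Context {d : Order.disp_t} {T : finPOrderType d}.
Variable S : {set T}.
Implicit Types (f g : T -> T) (p : T).
Local Open Scope order_scope.

Lemma chain_sum_fixed_step f g p : monotone_endo S f -> monotone_endo S g ->
  {in S, forall s, f s <= g s} -> {in S, forall s, s != p -> f s = g s} ->
  chain_sum (fixed_in S f) = chain_sum (fixed_in S g).
Proof.
move=> f_endo g_endo fg f_eq_g.
have same_fixed : (p \in fixed_in S f) = (p \in fixed_in S g) -> fixed_in S f = fixed_in S g.
  move=> Ep; apply/setP => s; have [-> // | sp] := eqVneq s p.
  by rewrite !inE; case sS: (s \in S); rewrite //= f_eq_g.
case pf: (p \in fixed_in S f); case pg: (p \in fixed_in S g); try by rewrite same_fixed ?pf ?pg.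
- apply: (chain_sum_fixed_up (p := p)) => //; move: pf pg; rewrite !inE => /andP[pS /eqP fp].
  by rewrite pS /= lt_def => /negbT ->; rewrite -{1}fp fg.
- apply: (chain_sum_fixed_down (p := p)) => //; move: pg pf; rewrite !inE => /andP[pS /eqP gp].
  by rewrite pS /= lt_def eq_sym => /negbT ->; rewrite -{2}gp fg.
Qed.

Lemma monotone_endo_update f g p : monotone_endo S f -> monotone_endo S g ->
  {in S, forall s, f s <= g s} -> p \in S -> {in S, forall s, p < s -> f s = g s} ->
  monotone_endo S (fun s => if s == p then g p else f s).
Proof.
move=> [fS fmono] [gS gmono] fg pS f_eq_g; split=> [s sS | a b aS bS ab].
  by case: eqP => _; [apply: gS | apply: fS].
case: (a =P p) => [ap | _]; case: (b =P p) => [bp | /eqP bp].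
- by rewrite lexx.
- have pb : p < b by rewrite lt_def bp -ap ab.
  by rewrite f_eq_g // gmono // ltW.
- by apply: le_trans (fg p pS); rewrite -bp fmono.
- exact: fmono.
Qed.

Lemma chain_sum_fixed_le f g : monotone_endo S f -> monotone_endo S g ->
  {in S, forall s, f s <= g s} -> chain_sum (fixed_in S f) = chain_sum (fixed_in S g).
Proof.
elim: {f}_.+1 {-2}f (ltnSn #|[set s in S | f s != g s]|) => // n IH f.
rewrite ltnS => Dn f_endo g_endo fg.
have [D0 | [x0 x0D]] := set_0Vmem [set s in S | f s != g s].
  congr chain_sum; apply/setP => s; rewrite !inE; case sS: (s \in S) => //=.
  by have := in_set0 s; rewrite -D0 inE sS => /negbFE/eqP->.
have [p pD pmax] := exists_maximal x0D; move: pD; rewrite inE => /andP[pS fgp].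
have f_eq_g : {in S, forall s, p < s -> f s = g s}.
  move=> s sS ps; apply/eqP/negPn/negP => fgs.
  by have := pmax s; rewrite inE sS fgs ps => /(_ isT).
pose f' s := if s == p then g p else f s.
have f'_endo := monotone_endo_update f_endo g_endo fg pS f_eq_g.
have ff' : {in S, forall s, f s <= f' s}.
  by move=> s sS; rewrite /f'; case: (s =P p) => [->|_]; rewrite ?fg ?lexx.
have f'g : {in S, forall s, f' s <= g s}.
  by move=> s sS; rewrite /f'; case: (s =P p) => [->|_]; rewrite ?fg ?lexx.
have D' : [set s in S | f' s != g s] = [set s in S | f s != g s] :\ p.
  apply/setP => s; rewrite !inE /f'.
  by case: (s =P p) => [-> | /eqP sp]; rewrite ?eqxx ?andbF ?sp.
rewrite (@chain_sum_fixed_step f f' p) //; last by move=> s sS /negbTE sp; rewrite /f' sp.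
by apply: IH => //; rewrite D'; rewrite (cardsD1 p) inE pS fgp in Dn.
Qed.

End FixedChainSum.

Section UnitInterval.
Local Open Scope R_scope.

Lemma locally_constant_eq01 (X : Type) (I : R -> X) :
  (forall t, 0 <= t <= 1 -> exists e, 0 < e /\
     forall t', 0 <= t' <= 1 -> Rabs (t' - t) < e -> I t' = I t) ->
  I 1 = I 0.
Proof.
move=> loc.
(* The supremum s of the t such that I is constant on [0, t] is reached, and is 1. *)
pose E t := 0 <= t <= 1 /\ forall u, 0 <= u <= t -> I u = I 0.
have E0 : E 0 by split=> [|u u0]; [lra | have -> : u = 0 by lra].
have [|s [s_ub s_lub]] := completeness E _ (ex_intro _ 0 E0).
  by exists 1 => t [t01 _]; lra.
have s0 : 0 <= s by apply: s_ub.
have s1 : s <= 1 by apply: s_lub => t [t01 _]; lra.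
have [e [e0 near_s]] := loc s (conj s0 s1).
have [t [[t01 Et] st]] : exists t, E t /\ s - e < t.
  apply: NNPP => noE; suff : s <= s - e by lra.
  by apply: s_lub => t Et; apply: Rnot_lt_le => st; apply: noE; exists t.
have ts : t <= s by apply: s_ub.
have Is : I s = I 0.
  by rewrite -(near_s t t01); [apply: Et; lra | apply: Rabs_def1; lra].
have [se1 | se1] := Rle_or_lt (s + e / 2) 1.
  suff : E (s + e / 2) by move/s_ub; lra.
  split=> [|u u_le]; first lra.
  have [ut | tu] := Rle_or_lt u t; first by apply: Et; lra.
  by rewrite near_s ?Is //; [lra | apply: Rabs_def1; lra].
by rewrite near_s ?Is //; [lra | apply: Rabs_def1; lra].
Qed.

End UnitInterval.

Section Contractible.
Context {d : Order.disp_t} {T : finPOrderType d}.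
Variable S : {set T}.
Local Open Scope order_scope.

Lemma common_radius (P : T -> R -> Prop) :
  (forall s e e', Rlt 0 e' -> Rle e' e -> P s e -> P s e') ->
  {in S, forall s, exists e, Rlt 0 e /\ P s e} ->
  exists e, Rlt 0 e /\ {in S, forall s, P s e}.
Proof.
move=> P_shrink; rewrite -[S]set_enum; elim: (enum S) => [|x l IH] radius.
  by exists R1; split=> [|s]; [apply: Rlt_0_1 | rewrite inE].
have [s sl | e2 [e2_pos P2]] := IH.
  by apply: radius; rewrite !inE in sl *; rewrite sl orbT.
have [e1 [e1_pos P1]] : exists e, Rlt 0 e /\ P x e by apply: radius; rewrite !inE eqxx.
have emin_pos := Rmin_pos _ _ e1_pos e2_pos.
exists (Rmin e1 e2); split=> // s; rewrite !inE => /orP[/eqP-> | sl].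
  exact: P_shrink emin_pos (Rmin_l _ _) P1.
by apply: P_shrink emin_pos (Rmin_r _ _) (P2 s _); rewrite ?inE.
Qed.

Lemma openIn_le (z : T) : openIn S [set y in S | y <= z].
Proof.
split=> [|x y yS]; first by apply/subsetP => y; rewrite inE => /andP[].
by rewrite !inE yS => /andP[_ /[swap]] /le_trans; apply.
Qed.

Lemma homotopy_le_near (H : R -> T -> T) t s :
  homotopy_continuous S H -> Rle 0 t /\ Rle t 1 -> s \in S -> H t s \in S ->
  exists e, Rlt 0 e /\ forall t' s', Rle 0 t' /\ Rle t' 1 -> Rlt (Rabs (Rminus t' t)) e ->
    s' \in S -> s' <= s -> H t' s' <= H t s.
Proof.
move=> H_cont t01 sS HtsS.
have [|e [e_pos near]] := H_cont _ (openIn_le (H t s)) t s t01 sS.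
  by rewrite inE HtsS /=.
exists e; split=> // t' s' t'01 t't s'S s's.
by move: (near t' s' t'01 t't s'S s's); rewrite inE => /andP[].
Qed.

Lemma contractible_chain_sum0 : contractible S -> chain_sum S = 0%R.
Proof.
move=> [y0 [H [y0S [H_S [H_cont [H0 H1]]]]]].
have near_diag t : forall e, Rlt 0 e -> Rlt (Rabs (Rminus t t)) e.
  by move=> e e_pos; rewrite Rminus_diag_eq // Rabs_R0.
have H_endo t : Rle 0 t /\ Rle t 1 -> monotone_endo S (H t).
  move=> t01; split=> [s sS | a b aS bS ab]; first exact: H_S.
  have [e [e_pos near]] := homotopy_le_near H_cont t01 bS (H_S t b t01 bS).
  exact: near (near_diag t e e_pos) aS ab.
pose I t := chain_sum (fixed_in S (H t)).
have : I R1 = I R0.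
  apply: locally_constant_eq01 => t t01.
  pose near_le s e := forall t', Rle 0 t' /\ Rle t' 1 ->
    Rlt (Rabs (Rminus t' t)) e -> H t' s <= H t s.
  have [e [e_pos near]] : exists e, Rlt 0 e /\ {in S, forall s, near_le s e}.
    apply: common_radius => [s e e' _ e'e near_e t' t'01 t't | s sS].
      by apply: near_e => //; apply: Rlt_le_trans e'e.
    have [e [e_pos near]] := homotopy_le_near H_cont t01 sS (H_S t s t01 sS).
    by exists e; split=> // t' t'01 t't; apply: near.
  exists e; split=> // t' t'01 t't.
  by apply: chain_sum_fixed_le; [exact: H_endo | exact: H_endo | move=> s sS; apply: near].
rewrite /I (_ : fixed_in S (H R0) = S); last first.
  by apply/setP => s; rewrite inE; case sS: (s \in S); rewrite //= H0 ?eqxx.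
move=> <-; apply: (@chain_sum_min _ _ _ y0) => [|y]; first by rewrite inE y0S H1 ?eqxx.
by rewrite inE => /andP[yS]; rewrite H1 // => /eqP->.
Qed.

End Contractible.

Theorem mainTheorem5 (d : Order.disp_t) (T : finPOrderType d) (x : T) :
  weak_beat_point x ->
  space_det [set: T] = (- space_det ([set: T] :\ x))%R.
Proof.
move=> beat.
have link0 : chain_sum (below [set: T] x) * chain_sum (above [set: T] x) = 0.
  have below_hatU : below [set: T] x = hatU x by apply/setP => y; rewrite !inE.
  have above_hatF : above [set: T] x = hatF x by apply/setP => y; rewrite !inE.
  case: beat => /contractible_chain_sum0 contr0.
    by rewrite below_hatU contr0 mul0r.
  by rewrite above_hatF contr0 mulr0.
rewrite !space_det_chain_sum (chain_sum_D1 (in_setT x)) link0 subr0.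
by rewrite (cardsD1 x) in_setT exprS mulN1r mulNr.
Qed.
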